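(* There exists a self-affine sponge $F\subset[0,1]^4$ satisfying the very strong SPPC for which $\mathcal B\subsetneq\mathcal A$. Nonetheless, for this sponge, $\max_{\sigma\in\mathcal B}\overline S(\mathbf p,\sigma)=\max_{\sigma\in\mathcal A}\overline S(\mathbf p,\sigma)$ for every probability vector $\mathbf p$ with strictly positive entries.
   Context: Setting: $d=4$, $\mathcal I=\{1,\dots,N\}$, $f_i(x)=A_ix+t_i$ on $\mathbb R^4$ with $A_i=\mathrm{diag}(\lambda_i^{(1)},\dots,\lambda_i^{(4)})$, all $\lambda_i^{(n)}\in(0,1)$, $f_i([0,1]^4)\subset[0,1]^4$, no two maps agree on $[0,1]^4$, and for all $m\ne n$ there is $i$ with $\lambda_i^{(n)}\ne\lambda_i^{(m)}$; $F$ is the attractor. $\Sigma=\mathcal I^{\mathbb N}$. For $\mathbf i\in\Sigma$, $r>0$, $L_{\mathbf i}(r,n)$ is the unique integer with $\prod_{\ell=1}^{L_{\mathbf i}(r,n)}\lambda_{i_\ell}^{(n)}\le r<\prod_{\ell=1}^{L_{\mathbf i}(r,n)-1}\lambda_{i_\ell}^{(n)}$. For a permutation $\sigma$ of $\{1,\dots,d\}$: $\mathbf i$ determines a strictly $\sigma$-ordered cylinder at scale $r$ if, with $L=L_{\mathbf i}(r,\sigma_d)$, $\prod_{\ell=1}^L\lambda_{i_\ell}^{(\sigma_d)}<\dots<\prod_{\ell=1}^L\lambda_{i_\ell}^{(\sigma_1)}$; $\mathbf i$ determines a $\sigma$-ordered cube at scale $r$ if $L_{\mathbf i}(r,\sigma_d)\le\dots\le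 L_{\mathbf i}(r,\sigma_1)$, with ties resolved by: if coordinates $k<m$ have $L_{\mathbf i}(r,k)=L_{\mathbf i}(r,m)$, then $k$ precedes $m$ iff $\prod_{\ell=1}^{L_{\mathbf i}(r,k)}\lambda_{i_\ell}^{(k)}\ge\prod_{\ell=1}^{L_{\mathbf i}(r,k)}\lambda_{i_\ell}^{(m)}$. $\mathcal A$ (resp. $\mathcal B$) is the set of $\sigma$ for which some $\mathbf i,r$ determine a $\sigma$-ordered cube (resp. strictly $\sigma$-ordered cylinder) at scale $r$. $E_n^\sigma$ is the span of coordinate axes $\sigma_1,\dots,\sigma_n$, $\Pi_n^\sigma$ the orthogonal projection onto it; $f_i,f_j$ overlap exactly on $E_n^\sigma$ if $\Pi_n^\sigma f_i=\Pi_n^\sigma f_j$ on $[0,1]^d$. Very strong SPPC: for all $\sigma\in\mathcal A$, $1\le n\le d$, $i,j$, either $f_i,f_j$ overlap exactly on $E_n^\sigma$ or $\Pi_n^\sigma(f_i([0,1]^d))\cap\Pi_n^\sigma(f_j([0,1]^d))=\emptyset$. For $\sigma\in\mathcal S_d$ and $1\le n\le d-1$, $\mathcal I_n^\sigma$ is the set of $j$ with no $i<j$ such that $f_i,f_j$ overlap exactly on $E_n^\sigma$; $\mathcal I_d^\sigma=\mathcal I$; $\Pi_n^\sigma j$ is the unique element of $\mathcal I_n^\sigma$ overlapping exactly with $j$ on $E_n^\sigma$ ($\Pi_d^\sigma=\mathrm{id}$, $\Pi_0^\sigma j=\emptyset$). $p_n^\sigma(i)=\sum_{j:\Pi_n^\sigma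 j=i}p(j)$ for $i\in\mathcal I_n^\sigma$, $p_0^\sigma(\emptyset)=1$, $P_{n-1}^\sigma(i)=p_n^\sigma(i)/p_{n-1}^\sigma(\Pi_{n-1}^\sigma i)$ for $i\in\mathcal I_n^\sigma$, and $\overline S(\mathbf p,\sigma)=\sum_{n=1}^d\max_{i\in\mathcal I_n^\sigma}\frac{\log P^\sigma_{n-1}(i)}{\log\lambda_i^{(\sigma_n)}}$. *)

From HB Require Import structures.
From mathcomp Require Import all_boot all_order all_algebra.
From mathcomp Require Import fingroup perm.
From mathcomp Require Import boolp reals exp.

Set Implicit Arguments.
Unset Strict Implicit.
Unset Printing Implicit Defensive.

Import Order.TTheory GRing.Theory Num.Theory.
Local Open Scope ring_scope.

(* Ambient dimension d = 4; coordinates 1..4 are represented by 'I_4 (0..3). *)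
Notation sdim := 4%N.

(* A diagonal IFS on R^4: N maps, f_i(x) = A_i x + t_i, A_i = diag(lam i). *)
Record IFS (R : realType) := MkIFS {
  N : nat;
  lam : 'I_N -> 'I_sdim -> R;
  tr : 'I_N -> 'I_sdim -> R }.
Arguments N {R} i.
Arguments lam {R} i _ _.
Arguments tr {R} i _ _.

Section Sponge.
Variable R : realType.
Variable S : IFS R.

Definition pt := 'I_sdim -> R.

Definition fmap (i : 'I_(N S)) (x : pt) : pt :=
  fun c => lam S i c * x c + tr S i c.

Definition in_cube (x : pt) : Prop := forall c, 0 <= x c <= 1.

Definition sponge_assumptions : Prop :=
  [/\ (forall i c, 0 < lam S i c < 1),
      (forall i x, in_cube x -> in_cube (fmap i x)),
      (forall i j, i != j -> ~ (forall x, in_cube x -> fmap i x = fmap j x)) &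
      (forall m n : 'I_sdim, m != n -> exists i, lam S i n != lam S i m)].

(* Codings: i = (i_1, i_2, ...) is represented by w : nat -> 'I_N, i_l = w (l-1). *)
Definition cylprod (w : nat -> 'I_(N S)) (n : 'I_sdim) (L : nat) : R :=
  \prod_(l < L) lam S (w l) n.

Definition isL (w : nat -> 'I_(N S)) (r : R) (n : 'I_sdim) (L : nat) : Prop :=
  (0 < L)%N /\ cylprod w n L <= r < cylprod w n L.-1.

(* sigma_k (k = 1..4) is sigma (k-1). "k precedes m" in sigma means
   sigma^-1 k < sigma^-1 m. *)
Definition sigma_ordered_cube (s : 'S_sdim) (w : nat -> 'I_(N S)) (r : R) : Prop :=
  exists Ls : 'I_sdim -> nat,
    [/\ (forall c, isL w r c (Ls c)),
        (forall a b : 'I_sdim, (a < b)%N -> (Ls (s b) <= Ls (s a))%N) &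
        (forall k m : 'I_sdim, (k < m)%N -> Ls k = Ls m ->
           ((s^-1)%g k < (s^-1)%g m)%N <-> cylprod w m (Ls k) <= cylprod w k (Ls k))].

Definition strictly_sigma_ordered_cyl (s : 'S_sdim) (w : nat -> 'I_(N S)) (r : R) : Prop :=
  exists L, isL w r (s ord_max) L /\
    (forall a b : 'I_sdim, (a < b)%N -> cylprod w (s b) L < cylprod w (s a) L).

Definition in_A (s : 'S_sdim) : Prop :=
  exists (w : nat -> 'I_(N S)) (r : R), 0 < r /\ sigma_ordered_cube s w r.

Definition in_B (s : 'S_sdim) : Prop :=
  exists (w : nat -> 'I_(N S)) (r : R), 0 < r /\ strictly_sigma_ordered_cyl s w r.

(* Orthogonal projection onto E_n^sigma = span of axes sigma_1..sigma_n. *)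
Definition proj (s : 'S_sdim) (n : nat) (x : pt) : pt :=
  fun c => if ((s^-1)%g c < n)%N then x c else 0.

Definition overlap_exactly (s : 'S_sdim) (n : nat) (i j : 'I_(N S)) : Prop :=
  forall x, in_cube x -> proj s n (fmap i x) = proj s n (fmap j x).

Definition very_strong_SPPC : Prop :=
  forall s, in_A s -> forall n, (1 <= n <= sdim)%N -> forall i j,
    overlap_exactly s n i j \/
    ~ (exists x y, [/\ in_cube x, in_cube y & proj s n (fmap i x) = proj s n (fmap j y)]).

Definition Iidx (s : 'S_sdim) (n : nat) (j : 'I_(N S)) : bool :=
  if n == sdim then true
  else [forall i : 'I_(N S), (i < j)%N ==> ~~ `[< overlap_exactly s n i j >]].

(* Pi_n^sigma j : the element of I_n^sigma overlapping exactly with j on E_n^sigma,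
   i.e. the least index overlapping exactly with j (identity for n = d). *)
Definition Pidx (s : 'S_sdim) (n : nat) (j : 'I_(N S)) : 'I_(N S) :=
  if n == sdim then j
  else [arg min_(i < j | `[< overlap_exactly s n i j >]) (i : nat)].

(* p_n^sigma; p_0^sigma(emptyset) = 1 (argument ignored for n = 0). *)
Definition pn (p : 'I_(N S) -> R) (s : 'S_sdim) (n : nat) (i : 'I_(N S)) : R :=
  if n == 0%N then 1 else \sum_(j | Pidx s n j == i) p j.

Definition Pcond (p : 'I_(N S) -> R) (s : 'S_sdim) (m : nat) (i : 'I_(N S)) : R :=
  pn p s m.+1 i / pn p s m (Pidx s m i).

(* All terms are >= 0 under the standing assumptions, so the finite max over the
   nonempty set I_n is taken with neutral element 0. *)
Definition Sbar (p : 'I_(N S) -> R) (s : 'S_sdim) : R :=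
  \sum_(k < sdim)
    \big[Num.max/0]_(i | Iidx s k.+1 i) (ln (Pcond p s k i) / ln (lam S i (s k))).

End Sponge.

From HB Require Import structures.
From mathcomp Require Import all_boot all_order all_algebra.
From mathcomp Require Import fingroup perm.
From mathcomp Require Import boolp reals exp.
From mathcomp Require Import lra.

(* The two maps send [0,1]^4 into [0,2/5]^4 and [1/2,1]^4, so their images are
   disjoint along every axis.  Hence no two maps overlap exactly on any
   E_n^sigma, the very strong SPPC holds, P_0 = p and P_n = 1 for n >= 1, and
   Sbar(p, sigma) only depends on sigma_1.  Axis 1 contracts least under both
   maps, so sigma_1 = 1 for every sigma in A.  Both maps contract the axes in
   the weak order 1, 3, 2, 4, which forces B = {(1,3,2,4)}; since the first map
   contracts axes 2 and 3 equally, the tie-breaking rule makes the identity an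
   ordered cube, so the identity lies in A but not in B. *)

Set Implicit Arguments.
Unset Strict Implicit.
Unset Printing Implicit Defensive.

Import Order.TTheory GRing.Theory Num.Theory.
Local Open Scope ring_scope.

Lemma perm_incr_eq1 n (s : {perm 'I_n}) : {homo s : i j / (i < j)%N} -> s = 1%g.
Proof.
move=> s_incr; apply/permP => i; rewrite perm1.
have ltn_ordT : transitive (fun a b : 'I_n => (a < b)%N).
  by move=> ? ? ?; apply: ltn_trans.
have enum_sorted : sorted (fun a b : 'I_n => (a < b)%N) (enum 'I_n).
  by have := iota_ltn_sorted 0 n; rewrite -val_enum_ord sorted_map.
have mem_map_s : map s (enum 'I_n) =i enum 'I_n.
  by move=> j; rewrite -[j](permKV s) mem_map ?mem_enum //; exact: perm_inj.
have : map s (enum 'I_n) = enum 'I_n.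
  apply: (irr_sorted_eq ltn_ordT) => //; first by move=> j; exact: ltnn.
  exact: (homo_sorted s_incr).
by move/(congr1 (nth i ^~ i)); rewrite (nth_map i) ?size_enum_ord // nth_ord_enum.
Qed.

Lemma bigmax_const_nonempty (R : realDomainType) (T : finType) (P : pred T)
    (x : R) (t : T) :
  P t -> \big[Num.max/0]_(s | P s) x = Num.max x 0.
Proof.
by move=> Pt; rewrite (bigD1 t) //=; elim/big_rec: _ => // s y _ ->; rewrite maxA maxxx.
Qed.

Lemma in_cube0 (R : realType) : in_cube (fun=> 0 : R).
Proof. by move=> c; rewrite lexx ler01. Qed.

Section Dominance.
Variables (R : realType) (S : IFS R).
Implicit Types (w : nat -> 'I_(N S)) (c : 'I_sdim) (s t : 'S_sdim) (r : R).
Hypothesis lam_gt0 : forall i c, 0 < lam S i c.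

Definition dominated c c' := forall i, lam S i c <= lam S i c'.

Lemma cylprod_gt0 w c L : 0 < cylprod w c L.
Proof. by apply: prodr_gt0 => l _; exact: lam_gt0. Qed.

Lemma cylprod_const i c L : cylprod (fun=> i) c L = lam S i c ^+ L.
Proof. by rewrite /cylprod prodr_const card_ord. Qed.

Lemma le_cylprod w c c' L : dominated c c' -> cylprod w c L <= cylprod w c' L.
Proof. by move=> dom; apply: ler_prod => l _; rewrite dom ltW. Qed.

Lemma in_B_dominated_later s c c' :
  c != c' -> dominated c c' -> in_B S s -> ((s^-1)%g c' < (s^-1)%g c)%N.
Proof.
move=> neq_cc' dom [w [r [_ [L [_ s_strict]]]]].
case: ltngtP => // [lt_cc'|/val_inj/perm_inj eq_cc']; last by rewrite eq_cc' eqxx in neq_cc'.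
by have := s_strict _ _ lt_cc'; rewrite !permKV ltNge le_cylprod.
Qed.

Lemma in_B_dominance_chain s t :
  (forall a b : 'I_sdim, (a < b)%N -> dominated (t b) (t a)) -> in_B S s -> s = t.
Proof.
move=> chain sB; apply/eqP; rewrite eq_sym eq_mulgV1; apply/eqP/perm_incr_eq1 => a b ab.
rewrite !permM; apply: in_B_dominated_later (chain _ _ ab) sB.
by rewrite (inj_eq perm_inj); apply: contraTneq ab => ->; rewrite ltnn.
Qed.

Hypothesis lam_le1 : forall i c, lam S i c <= 1.

Lemma cylprod_antitone w c L L' : (L <= L')%N -> cylprod w c L' <= cylprod w c L.
Proof.
move=> /subnK <-; elim: (L' - L)%N => [|k IH]; first by rewrite add0n.
rewrite addSn (le_trans _ IH) // {1}/cylprod big_ord_recr /=.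
by rewrite ger_pMr ?cylprod_gt0.
Qed.

Lemma isL_dominated w r c c' Lc Lc' :
  dominated c c' -> isL w r c Lc -> isL w r c' Lc' -> (Lc <= Lc')%N.
Proof.
move=> dom [Ls0_gt0 /andP[_ r_lt]] [_ /andP[r_ge _]].
rewrite leqNgt; apply/negP => lt_Lc'_Lc.
have le_Lc' : (Lc' <= Lc.-1)%N by rewrite -ltnS prednK.
have := le_trans (cylprod_antitone w c le_Lc') (le_cylprod w Lc' dom).
by move/le_trans/(_ r_ge)/le_lt_trans/(_ r_lt); rewrite ltxx.
Qed.

Lemma in_A_dominant_first s :
  (forall c, dominated c ord0) -> in_A S s -> s ord0 = ord0.
Proof.
move=> dom0 [w [r [_ [Ls [isL_Ls Ls_sorted Ls_tie]]]]].
apply/eqP; apply: contraT => s0_neq0.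
have pos_ax1_gt0 : (0 < (s^-1)%g ord0)%N.
  rewrite lt0n; apply: contra s0_neq0 => /eqP pos0.
  by apply/eqP/(canLR (permKV s))/val_inj; rewrite /= pos0.
have s0_gt0 : (0 < s ord0)%N by rewrite lt0n.
have tie : Ls ord0 = Ls (s ord0).
  apply/eqP; rewrite eqn_leq (isL_dominated (dom0 _) (isL_Ls _) (isL_Ls _)) andbT.
  by have := Ls_sorted ord0 _ pos_ax1_gt0; rewrite permKV.
(* the tie-break between axes 1 and sigma_1 puts axis 1 first, i.e. at position < 0 *)
by have [_] := Ls_tie ord0 _ s0_gt0 tie; rewrite permK ltn0; apply; exact: le_cylprod.
Qed.

End Dominance.

Section Separation.
Variables (R : realType) (S : IFS R).
Implicit Types (i j : 'I_(N S)) (p : 'I_(N S) -> R) (s : 'S_sdim).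

Definition axis_separated := forall c i j (x y : pt R),
  i != j -> in_cube x -> in_cube y -> fmap i x c != fmap j y c.

Hypothesis sep : axis_separated.

Lemma separated_maps_differ i j :
  i != j -> ~ (forall x, in_cube x -> fmap i x = fmap j x).
Proof.
move=> ij eq_ij; have := sep ord0 ij (in_cube0 R) (in_cube0 R).
by rewrite eq_ij ?eqxx //; exact: in_cube0.
Qed.

Lemma separated_overlap_exactly s n i j :
  (0 < n)%N -> overlap_exactly s n i j -> i = j.
Proof.
move=> n_gt0 ov; apply/eqP; apply: contraT => ij.
have := sep (s ord0) ij (in_cube0 R) (in_cube0 R).
have := congr1 (fun z => z (s ord0)) (ov _ (in_cube0 R)).
by rewrite /proj permK n_gt0 => ->; rewrite eqxx.
Qed.

Lemma separated_very_strong_SPPC : very_strong_SPPC S.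
Proof.
move=> s _ n /andP[n_gt0 _] i j; have [<-|ij] := eqVneq i j; first by left.
right=> -[x [y [x_cube y_cube eq_xy]]].
have := sep (s ord0) ij x_cube y_cube.
have := congr1 (fun z => z (s ord0)) eq_xy.
by rewrite /proj permK n_gt0 => ->; rewrite eqxx.
Qed.

Lemma separated_Pidx s n j : (0 < n)%N -> Pidx s n j = j.
Proof.
move=> n_gt0; rewrite /Pidx; case: eqP => // _.
case: arg_minnP => [|i /asboolP ov _]; first by apply/asboolP.
exact: separated_overlap_exactly ov.
Qed.

Lemma separated_Iidx s n j : (0 < n)%N -> Iidx s n j.
Proof.
move=> n_gt0; rewrite /Iidx; case: eqP => // _.
apply/forallP => i; apply/implyP => ij; apply/negP => /asboolP ov.
by rewrite (separated_overlap_exactly n_gt0 ov) ltnn in ij.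
Qed.

Lemma separated_pn p s n i : (0 < n)%N -> pn p s n i = p i.
Proof.
move=> n_gt0; rewrite /pn gtn_eqF //.
by rewrite (eq_bigl (pred1 i)) ?big_pred1_eq // => j; rewrite /= separated_Pidx.
Qed.

Lemma separated_Pcond0 p s i : Pcond p s 0 i = p i.
Proof. by rewrite /Pcond separated_pn // /pn eqxx divr1. Qed.

Lemma separated_PcondS p s m i : p i != 0 -> Pcond p s m.+1 i = 1.
Proof. by move=> pi_neq0; rewrite /Pcond !separated_pn ?separated_Pidx ?divff. Qed.

Lemma separated_Sbar p s : (forall i, p i != 0) ->
  Sbar p s = \big[Num.max/0]_i (ln (p i) / ln (lam S i (s ord0))).
Proof.
move=> p_neq0; rewrite /Sbar big_ord_recl big1 ?addr0.
  by apply: eq_big => i; rewrite ?separated_Iidx ?separated_Pcond0.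
move=> k _; apply: big1_idem => [|i _]; first exact: maxxx.
by rewrite separated_PcondS ?ln1 ?mul0r.
Qed.

End Separation.

Section Example.
Variable R : realType.

Definition lo : 'I_2 := @Ordinal 2 0 isT.
Definition hi : 'I_2 := @Ordinal 2 1 isT.

Definition ax1 : 'I_sdim := ord0.
Definition ax2 : 'I_sdim := @Ordinal 4 1 isT.
Definition ax3 : 'I_sdim := @Ordinal 4 2 isT.
Definition ax4 : 'I_sdim := @Ordinal 4 3 isT.

Definition ex_lam (i : 'I_2) (c : 'I_sdim) : R :=
  if i == lo then [:: 2/5; 1/4; 1/4; 1/8]`_c else [:: 1/2; 1/4; 1/3; 1/8]`_c.

Definition ex_tr (i : 'I_2) (c : 'I_sdim) : R := if i == lo then 0 else 1/2.

Definition ex_sponge : IFS R := MkIFS ex_lam ex_tr.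

Definition swap23 : 'S_sdim := tperm ax2 ax3.

Lemma ord2_cases (i : 'I_2) : i = lo \/ i = hi.
Proof. by case: i => [[|[|i]] Hi] //; [left | right]; apply/val_inj. Qed.

Lemma ord4_cases (c : 'I_sdim) : [\/ c = ax1, c = ax2, c = ax3 | c = ax4].
Proof.
case: c => [[|[|[|[|c]]]] Hc] //.
- by constructor 1; apply/val_inj.
- by constructor 2; apply/val_inj.
- by constructor 3; apply/val_inj.
- by constructor 4; apply/val_inj.
Qed.

Lemma swap23E : [/\ swap23 ax1 = ax1, swap23 ax2 = ax3, swap23 ax3 = ax2 & swap23 ax4 = ax4].
Proof. by rewrite /swap23 tpermL tpermR !tpermD. Qed.

Lemma ex_lam_bounds i c : 0 < lam ex_sponge i c < 1.
Proof.
by case: (ord2_cases i) => ->; case: (ord4_cases c) => ->; rewrite /= /ex_lam /=;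
  apply/andP; split; lra.
Qed.

Lemma ex_fmap_lo x c : in_cube x -> 0 <= @fmap _ ex_sponge lo x c <= 2/5.
Proof.
move=> /(_ c); rewrite /fmap /=; case: (ord4_cases c) => -> /andP[? ?];
  by rewrite /ex_lam /ex_tr /=; apply/andP; split; lra.
Qed.

Lemma ex_fmap_hi x c : in_cube x -> 1/2 <= @fmap _ ex_sponge hi x c <= 1.
Proof.
move=> /(_ c); rewrite /fmap /=; case: (ord4_cases c) => -> /andP[? ?];
  by rewrite /ex_lam /ex_tr /=; apply/andP; split; lra.
Qed.

Lemma ex_separated : axis_separated ex_sponge.
Proof.
move=> c i j x y; case: (ord2_cases i) => ->; case: (ord2_cases j) => -> //= _ x_cube y_cube.
- have /andP[_ lo_le] := ex_fmap_lo c x_cube; have /andP[hi_ge _] := ex_fmap_hi c y_cube.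
  by rewrite lt_eqF //; lra.
- have /andP[_ lo_le] := ex_fmap_lo c y_cube; have /andP[hi_ge _] := ex_fmap_hi c x_cube.
  by rewrite gt_eqF //; lra.
Qed.

Lemma ex_sponge_assumptions : sponge_assumptions ex_sponge.
Proof.
split.
- exact: ex_lam_bounds.
- move=> i x x_cube c; case: (ord2_cases i) => ->.
    by have /andP[? ?] := ex_fmap_lo c x_cube; apply/andP; split; lra.
  by have /andP[? ?] := ex_fmap_hi c x_cube; apply/andP; split; lra.
- exact: separated_maps_differ ex_separated.
- move=> m n; case: (ord4_cases m) => ->; case: (ord4_cases n) => -> //= _;
    first [by exists lo; rewrite /= /ex_lam /=; apply/eqP; lra
          | by exists hi; rewrite /= /ex_lam /=; apply/eqP; lra].
Qed.

Lemma ex_lam_gt0 i c : 0 < lam ex_sponge i c.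
Proof. by case/andP: (ex_lam_bounds i c). Qed.

Lemma ex_lam_le1 i c : lam ex_sponge i c <= 1.
Proof. by case/andP: (ex_lam_bounds i c) => _ /ltW. Qed.

Lemma ex_in_A_first s : in_A ex_sponge s -> s ax1 = ax1.
Proof.
move=> sA; apply: (in_A_dominant_first ex_lam_gt0 ex_lam_le1 _ sA) => c i.
by case: (ord2_cases i) => ->; case: (ord4_cases c) => ->; rewrite /= /ex_lam /=; lra.
Qed.

Lemma ex_in_B_eq_swap23 s : in_B ex_sponge s -> s = swap23.
Proof.
move=> sB; have [s1 s2 s3 s4] := swap23E.
apply: (in_B_dominance_chain ex_lam_gt0 _ sB) => a b ab i.
case: (ord2_cases i) => ->; case: (ord4_cases a) ab => ->; case: (ord4_cases b) => -> //= _;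
  rewrite ?s1 ?s2 ?s3 ?s4 /= /ex_lam /=; lra.
Qed.

Lemma swap23_in_B : in_B ex_sponge swap23.
Proof.
have [s1 s2 s3 s4] := swap23E.
exists (fun=> hi), (1/8); split; first lra.
exists 1%N; split.
- have -> : ord_max = ax4 by apply/val_inj.
  rewrite s4; split => //.
  by rewrite !cylprod_const /= /ex_lam /= expr1 expr0; apply/andP; split; lra.
- move=> a b; case: (ord4_cases a) => ->; case: (ord4_cases b) => -> //= _;
    by rewrite ?s1 ?s2 ?s3 ?s4 !cylprod_const /= /ex_lam /= !expr1; lra.
Qed.

Lemma swap23_in_A : in_A ex_sponge swap23.
Proof.
have [s1 s2 s3 s4] := swap23E.
(* at scale 1/8 axes 2 and 3 tie, and the tie-break puts axis 3 first as 1/9 > 1/16 *)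
exists (fun=> hi), (1/8); split; first lra.
exists (fun c => nth 0 [:: 3; 2; 2; 1] c)%N; split.
- move=> c; split; first by case: (ord4_cases c) => ->.
  by rewrite !cylprod_const; case: (ord4_cases c) => ->; rewrite /= /ex_lam /= !exprS ?expr0;
    apply/andP; split; lra.
- move=> a b; case: (ord4_cases a) => ->; case: (ord4_cases b) => -> //;
    by rewrite ?s1 ?s2 ?s3 ?s4.
- move=> k m; case: (ord4_cases k) => ->; case: (ord4_cases m) => -> //= _ _.
  by rewrite tpermV s2 s3 !cylprod_const /= /ex_lam /= !exprS ?expr0; split => //; lra.
Qed.

Lemma id_in_A : in_A ex_sponge 1.
Proof.
(* lo contracts axes 2 and 3 equally, so the tie-break keeps them in index order *)
exists (fun=> lo), (1/4); split; first lra.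
exists (fun c => nth 0 [:: 2; 1; 1; 1] c)%N; split.
- move=> c; split; first by case: (ord4_cases c) => ->.
  by rewrite !cylprod_const; case: (ord4_cases c) => ->; rewrite /= /ex_lam /= !exprS ?expr0;
    apply/andP; split; lra.
- by move=> a b; case: (ord4_cases a) => ->; case: (ord4_cases b) => -> //; rewrite !perm1.
- move=> k m; case: (ord4_cases k) => ->; case: (ord4_cases m) => -> //= _ _;
    by rewrite invg1 !perm1 !cylprod_const /= /ex_lam /= !exprS ?expr0; split => // _; lra.
Qed.

Lemma id_notin_B : ~ in_B ex_sponge 1.
Proof.
by move/ex_in_B_eq_swap23/(congr1 (fun s : 'S_sdim => val (s ax2))); rewrite perm1 tpermL.
Qed.

Lemma ex_in_B_in_A s : in_B ex_sponge s -> in_A ex_sponge s.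
Proof. by move/ex_in_B_eq_swap23 ->; exact: swap23_in_A. Qed.

End Example.

Theorem proposition3p4 (R : realType) :
  exists S : IFS R,
    [/\ sponge_assumptions S,
        very_strong_SPPC S,
        (forall s, in_B S s -> in_A S s) /\ (exists s, in_A S s /\ ~ in_B S s) &
        forall p : 'I_(N S) -> R,
          (forall i, 0 < p i) -> \sum_i p i = 1 ->
          \big[Num.max/0]_(s : 'S_sdim | `[< in_B S s >]) Sbar p s =
          \big[Num.max/0]_(s : 'S_sdim | `[< in_A S s >]) Sbar p s].
Proof.
exists (ex_sponge R); split.
- exact: ex_sponge_assumptions.
- exact/separated_very_strong_SPPC/ex_separated.
- split; first exact: ex_in_B_in_A.
  by exists 1%g; split; [exact: id_in_A | exact: id_notin_B].
move=> p p_gt0 _.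
pose g := \big[Num.max/0]_i (ln (p i) / ln (lam (ex_sponge R) i ax1)).
have Sbar_A s : in_A (ex_sponge R) s -> Sbar p s = g.
  move/ex_in_A_first => s_ax1; rewrite separated_Sbar ?s_ax1 //; first exact: ex_separated.
  by move=> i; rewrite gt_eqF.
rewrite (eq_bigr (fun=> g)) => [|s /asboolP/ex_in_B_in_A/Sbar_A //].
rewrite [RHS](eq_bigr (fun=> g)) => [|s /asboolP/Sbar_A //].
rewrite (bigmax_const_nonempty _ (asboolT (swap23_in_B R))).
by rewrite (bigmax_const_nonempty _ (asboolT (id_in_A R))).
Qed.
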